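(* Let $\mathsf E$ be a completely unsharp observable on $\mathcal H_S$, and let $\mathcal I$ be an $\mathsf E$-instrument with the following property: for every full-rank state $\rho$ on $\mathcal H_S$ and every outcome $x$, the operator $\mathcal I_x(\rho)$ is positive definite. Then $\mathcal I$ is implemented by some measurement scheme constrained by the third law.
   Context: All Hilbert spaces are finite-dimensional and complex. A state is a positive operator of unit trace; it is full-rank if it is positive definite. A channel is a completely positive trace-preserving linear map. A channel is constrained by the third law if it maps every full-rank state on its input space to a full-rank state on its output space. Let $2\le\dim\mathcal H_S<\infty$. An observable is a finite family $\mathsf E=\{\mathsf E_x\}_{x\in\mathcal X}$ of nonzero operators with $0\le\mathsf E_x\le\mathbb 1$ and $\sum_x\mathsf E_x=\mathbb 1$. It is completely unsharp if, for every $x$, the spectrum of $\mathsf E_x$ contains neither $0$ nor $1$. An $\mathsf E$-instrument is a family $\{\mathcal I_x\}_{x\in\mathcal X}$ of completely positive maps on $\mathcal L(\mathcal H_S)$ with $\mathrm{tr}[\mathcal I_x(\rho)]=\mathrm{tr}[\mathsf E_x\rho]$ for all $x$ and all states $\rho$. A measurement scheme $(\mathcal H_A,\xi,\mathcal E,\mathsf Z)$ consists of: - a finite-dimensional $\mathcal H_A$; - a state $\xi$ on $\mathcal H_A$; - a channel $\mathcal E$ on $\mathcal L(\mathcal H_S\otimes\mathcal H_A)$; - positive operators $\{\mathsf Z_x\}_{x\in\mathcal X}$ on $\mathcal H_A$ summing to $\mathbb 1$. It implements $\mathcal I_x(\rho)=\mathrm{tr}_A[(\mathbb 1\otimes\mathsf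 Z_x)\mathcal E(\rho\otimes\xi)]$. It is constrained by the third law if $\xi$ is full-rank and $\mathcal E$ is constrained by the third law. *)

From HB Require Import structures.
From mathcomp Require Import all_boot all_order all_algebra.
From mathcomp Require Import complex mxtens.
From mathcomp Require Import reals.
Set Implicit Arguments. Unset Strict Implicit. Unset Printing Implicit Defensive.
Import Order.TTheory GRing.Theory Num.Theory.
Local Open Scope ring_scope.

Section QDefs.
Variable C : numClosedFieldType.

Definition adjmx (p q : nat) (A : 'M[C]_(p, q)) : 'M[C]_(q, p) :=
  (map_mx (fun z => z^*) A)^T.

Definition posop (n : nat) (A : 'M[C]_n) : Prop :=
  adjmx A = A /\ forall v : 'cV[C]_n, 0 <= (adjmx v *m A *m v) 0 0.

Definition posdef (n : nat) (A : 'M[C]_n) : Prop :=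
  adjmx A = A /\ forall v : 'cV[C]_n, v != 0 -> 0 < (adjmx v *m A *m v) 0 0.

Definition is_state (n : nat) (rho : 'M[C]_n) : Prop := posop rho /\ \tr rho = 1.

Definition fullrank_state (n : nat) (rho : 'M[C]_n) : Prop :=
  is_state rho /\ posdef rho.

Definition linmap (n m : nat) (f : 'M[C]_n -> 'M[C]_m) : Prop :=
  forall (a : C) (A B : 'M[C]_n), f (a *: A + B) = a *: f A + f B.

(* ampliation id_k (x) f acting on L(C^k (x) C^n) *)
Definition ampl (k n m : nat) (f : 'M[C]_n -> 'M[C]_m) (X : 'M[C]_(k * n))
  : 'M[C]_(k * m) :=
  \matrix_(r, s)
    f (\matrix_(i, j) X (mxtens_index ((mxtens_unindex r).1, i))
                         (mxtens_index ((mxtens_unindex s).1, j)))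
      (mxtens_unindex r).2 (mxtens_unindex s).2.

Definition completely_positive (n m : nat) (f : 'M[C]_n -> 'M[C]_m) : Prop :=
  linmap f /\ forall (k : nat) (X : 'M[C]_(k * n)), posop X -> posop (ampl f X).

Definition trace_preserving (n m : nat) (f : 'M[C]_n -> 'M[C]_m) : Prop :=
  forall A : 'M[C]_n, \tr (f A) = \tr A.

Definition channel (n m : nat) (f : 'M[C]_n -> 'M[C]_m) : Prop :=
  completely_positive f /\ trace_preserving f.

Definition third_law_channel (n m : nat) (f : 'M[C]_n -> 'M[C]_m) : Prop :=
  forall rho : 'M[C]_n, fullrank_state rho -> fullrank_state (f rho).

Definition observable (n : nat) (X : finType) (E : X -> 'M[C]_n) : Prop :=
  [/\ forall x, E x != 0,
      forall x, posop (E x),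
      forall x, posop (1%:M - E x)
    & \sum_(x : X) E x = 1%:M].

Definition completely_unsharp (n : nat) (X : finType) (E : X -> 'M[C]_n) : Prop :=
  forall x, ~ eigenvalue (E x) 0 /\ ~ eigenvalue (E x) 1.

Definition instrument (n : nat) (X : finType) (E : X -> 'M[C]_n)
  (I : X -> 'M[C]_n -> 'M[C]_n) : Prop :=
  (forall x, completely_positive (I x)) /\
  (forall x (rho : 'M[C]_n), is_state rho -> \tr (I x rho) = \tr (E x *m rho)).

(* partial trace over the second (ancilla) factor *)
Definition ptrA (n m : nat) (M : 'M[C]_(n * m)) : 'M[C]_n :=
  \matrix_(i, j) \sum_(k < m) M (mxtens_index (i, k)) (mxtens_index (j, k)).

Definition meas_scheme (n m : nat) (X : finType) (xi : 'M[C]_m)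
  (Ech : 'M[C]_(n * m) -> 'M[C]_(n * m)) (Z : X -> 'M[C]_m) : Prop :=
  [/\ is_state xi, channel Ech, forall x, posop (Z x) & \sum_(x : X) Z x = 1%:M].

Definition implements (n m : nat) (X : finType) (xi : 'M[C]_m)
  (Ech : 'M[C]_(n * m) -> 'M[C]_(n * m)) (Z : X -> 'M[C]_m)
  (I : X -> 'M[C]_n -> 'M[C]_n) : Prop :=
  forall x (A : 'M[C]_n),
    I x A = ptrA ((1%:M *t Z x) *m Ech (A *t xi)).

Definition third_law_scheme (n m : nat) (xi : 'M[C]_m)
  (Ech : 'M[C]_(n * m) -> 'M[C]_(n * m)) : Prop :=
  posdef xi /\ third_law_channel Ech.

End QDefs.

From HB Require Import structures.
From mathcomp Require Import all_boot all_order all_algebra.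
From mathcomp Require Import complex mxtens.
From mathcomp Require Import reals.
From mathcomp Require Import ring.
Import Order.TTheory GRing.Theory Num.Theory.
Local Open Scope ring_scope.
Set Implicit Arguments. Unset Strict Implicit. Unset Printing Implicit Defensive.

(** Take the ancilla [C^X] with outcome basis [|x>], the maximally mixed state
    [xi = 1/|X|], the pointer projections [Z_x = |x><x|], and the channel
    [Y |-> \sum_x K_x I_x(tr_A Y) K_x^†], where [K_x v = v ⊗ |x>]. Since
    [tr_A (A ⊗ xi) = A], [tr_A (K_x B K_x^†) = B] and
    [(1 ⊗ Z_x) K_y = [x == y] K_y], the scheme implements [I]. The channel is
    completely positive as a sum of composites of conjugations, and trace
    preserving because [\sum_x tr (I_x A) = tr A]: both sides are linear in [A]
    and agree on states, which span all operators by polarization. If [Y] is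
    full rank then so is [tr_A Y], hence so is every [I_x(tr_A Y)]; as the
    ranges of the isometries [K_x] span the whole space, the output is full
    rank as well. *)

Section Adjoint.
Variable C : numClosedFieldType.

Lemma adjmxE p q (A : 'M[C]_(p, q)) i j : adjmx A i j = (A j i)^*.
Proof. by rewrite /adjmx !mxE. Qed.

Lemma adjmxK p q (A : 'M[C]_(p, q)) : adjmx (adjmx A) = A.
Proof. by apply/matrixP=> i j; rewrite !adjmxE conjCK. Qed.

Lemma adjmxM p q r (A : 'M[C]_(p, q)) (B : 'M[C]_(q, r)) :
  adjmx (A *m B) = adjmx B *m adjmx A.
Proof.
apply/matrixP=> i j; rewrite adjmxE !mxE rmorph_sum; apply: eq_bigr=> k _.
by rewrite !adjmxE rmorphM mulrC.
Qed.

Lemma adjmxD p q (A B : 'M[C]_(p, q)) : adjmx (A + B) = adjmx A + adjmx B.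
Proof. by apply/matrixP=> i j; rewrite !(adjmxE, mxE) rmorphD. Qed.

Lemma adjmx0 p q : adjmx (0 : 'M[C]_(p, q)) = 0.
Proof. by apply/matrixP=> i j; rewrite !(adjmxE, mxE) conjC0. Qed.

Lemma adjmx_scalar p a : adjmx (a%:M : 'M[C]_p) = a^*%:M.
Proof.
apply/matrixP=> i j; rewrite !(adjmxE, mxE) [j == i]eq_sym.
by case: (i == j); rewrite ?mulr1n ?mulr0n ?conjC0.
Qed.

Lemma cV_neq0_entry p (v : 'cV[C]_p) : v != 0 -> exists k, v k 0 != 0.
Proof.
move=> v_neq0; apply/existsP; apply: contraR v_neq0.
rewrite negb_exists => /forallP v0.
by apply/eqP/matrixP=> i j; rewrite ord1 mxE; apply/eqP/negbNE/v0.
Qed.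

Lemma adjmx_mul_selfE p (v : 'cV[C]_p) :
  (adjmx v *m v) 0 0 = \sum_k v k 0 * (v k 0)^*.
Proof. by rewrite mxE; apply: eq_bigr=> k _; rewrite adjmxE mulrC. Qed.

Lemma adjmx_mul_self_ge0 p (v : 'cV[C]_p) : 0 <= (adjmx v *m v) 0 0.
Proof. by rewrite adjmx_mul_selfE sumr_ge0 // => k _; exact: mul_conjC_ge0. Qed.

Lemma adjmx_mul_self_gt0 p (v : 'cV[C]_p) : v != 0 -> 0 < (adjmx v *m v) 0 0.
Proof.
move=> /cV_neq0_entry[k vk_neq0].
rewrite adjmx_mul_selfE (bigD1 k) //= ltr_pwDl ?mul_conjC_gt0 //.
by rewrite sumr_ge0 // => i _; exact: mul_conjC_ge0.
Qed.

End Adjoint.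

Section Positivity.
Variable C : numClosedFieldType.

Lemma posdef_posop p (A : 'M[C]_p) : posdef A -> posop A.
Proof.
case=> A_herm A_pos; split=> // v; have [->|v_neq0] := eqVneq v 0.
  by rewrite mulmx0 mxE.
exact/ltW/A_pos.
Qed.

Lemma posop0 p : posop (0 : 'M[C]_p).
Proof. by split; [rewrite adjmx0 | move=> v; rewrite mulmx0 mul0mx mxE]. Qed.

Lemma posopD p (A B : 'M[C]_p) : posop A -> posop B -> posop (A + B).
Proof.
case=> A_herm A_pos [B_herm B_pos]; split; first by rewrite adjmxD A_herm B_herm.
by move=> v; rewrite mulmxDr mulmxDl mxE addr_ge0.
Qed.

Lemma posop_sum p (I : finType) (F : I -> 'M[C]_p) :
  (forall i, posop (F i)) -> posop (\sum_i F i).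
Proof.
move=> F_pos; elim/big_rec: _ => [|i A _ A_pos]; first exact: posop0.
exact: posopD.
Qed.

Lemma posop_conj p q (M : 'M[C]_(p, q)) (A : 'M[C]_q) :
  posop A -> posop (M *m A *m adjmx M).
Proof.
case=> A_herm A_pos; split; first by rewrite !adjmxM adjmxK A_herm mulmxA.
by move=> v; have := A_pos (adjmx M *m v); rewrite adjmxM adjmxK !mulmxA.
Qed.

Lemma posop_scalar p a : 0 <= a -> posop (a%:M : 'M[C]_p).
Proof.
move=> a_ge0; split; first by rewrite adjmx_scalar geC0_conj.
move=> v; rewrite mul_mx_scalar -scalemxAl mxE.
by rewrite mulr_ge0 // adjmx_mul_self_ge0.
Qed.

Lemma posdef_scalar p a : 0 < a -> posdef (a%:M : 'M[C]_p).
Proof.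
move=> a_gt0; split; first by rewrite adjmx_scalar geC0_conj // ltW.
move=> v v_neq0; rewrite mul_mx_scalar -scalemxAl mxE.
by rewrite mulr_gt0 // adjmx_mul_self_gt0.
Qed.

Lemma delta_mx_cV p (i j : 'I_p) :
  delta_mx i j = (delta_mx i 0 : 'cV[C]_p) *m adjmx (delta_mx j 0 : 'cV[C]_p).
Proof.
apply/matrixP=> a b; rewrite !(mxE, big_ord1, adjmxE) eqxx !andbT.
by case: (a == i); case: (b == j);
  rewrite /= ?mulr1n ?mulr0n ?conjC1 ?conjC0 ?mul1r ?mul0r ?mulr0.
Qed.

Lemma posop_delta_mx p (i : 'I_p) : posop (delta_mx i i : 'M[C]_p).
Proof.
rewrite delta_mx_cV -[X in X *m _]mulmx1.
by apply: posop_conj; apply: posop_scalar; exact: ler01.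
Qed.

Lemma posdef_sum_conj p q (J : finType) (M : J -> 'M[C]_(p, q))
    (P : J -> 'M[C]_q) :
  (forall j, posdef (P j)) ->
  (forall v : 'cV[C]_p, v != 0 -> exists j, adjmx (M j) *m v != 0) ->
  posdef (\sum_j M j *m P j *m adjmx (M j)).
Proof.
move=> P_pd M_cover.
have [sum_herm _] : posop (\sum_j M j *m P j *m adjmx (M j)).
  by apply: posop_sum=> j; apply/posop_conj/posdef_posop.
split=> // v /M_cover[j0 Mj0v_neq0].
have formE j : (adjmx v *m (M j *m P j *m adjmx (M j)) *m v) 0 0
    = (adjmx (adjmx (M j) *m v) *m P j *m (adjmx (M j) *m v)) 0 0.
  by rewrite adjmxM adjmxK !mulmxA.
rewrite mulmx_sumr mulmx_suml summxE (bigD1 j0) //= formE.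
have [_ /(_ _ Mj0v_neq0) form_j0_gt0] := P_pd j0.
apply: (lt_le_trans form_j0_gt0); rewrite lerDl sumr_ge0 // => j _.
by rewrite formE; case: (posdef_posop (P_pd j))=> _; apply.
Qed.

End Positivity.

Section Ampliation.
Variable C : numClosedFieldType.

Lemma big_mxtens_index m n (F : 'I_(m * n) -> C) :
  \sum_u F u = \sum_i \sum_j F (mxtens_index (i, j)).
Proof.
rewrite pair_big /=; apply: (reindex (fun p => mxtens_index (p.1, p.2))).
exists (@mxtens_unindex m n)=> u _ /=.
  by case: u=> ? ?; rewrite mxtens_indexK.
exact: mxtens_unindexK.
Qed.

Lemma mul_tens1mxE k p q (M : 'M[C]_(p, q)) r (Y : 'M[C]_(k * q, r)) a i w :
  ((1%:M *t M) *m Y) (mxtens_index (a, i)) w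
  = \sum_i' M i i' * Y (mxtens_index (a, i')) w.
Proof.
rewrite mxE big_mxtens_index (bigD1 a) //= [X in _ + X]big1 ?addr0.
  by apply: eq_bigr=> i' _; rewrite tensmxE mxE eqxx mulr1n mul1r.
move=> a' a'_neq_a; apply: big1=> i' _.
by rewrite tensmxE mxE eq_sym (negbTE a'_neq_a) mulr0n !mul0r.
Qed.

Lemma mul_mx_tens1E k p q (N : 'M[C]_(p, q)) r (Y : 'M[C]_(r, k * p)) u b j :
  (Y *m (1%:M *t N)) u (mxtens_index (b, j))
  = \sum_j' Y u (mxtens_index (b, j')) * N j' j.
Proof.
rewrite mxE big_mxtens_index (bigD1 b) //= [X in _ + X]big1 ?addr0.
  by apply: eq_bigr=> j' _; rewrite tensmxE mxE eqxx mulr1n mul1r.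
move=> b' b'_neq_b; apply: big1=> j' _.
by rewrite tensmxE mxE (negbTE b'_neq_b) mulr0n !mul0r mulr0.
Qed.

Lemma adjmx_tens1mx k p q (M : 'M[C]_(p, q)) :
  adjmx (1%:M *t M : 'M_(k * p, k * q)) = 1%:M *t adjmx M.
Proof.
apply/matrixP=> u w.
case: (mxtens_indexP u)=> a i; case: (mxtens_indexP w)=> b j.
rewrite adjmxE !tensmxE !mxE [b == a]eq_sym.
by case: (a == b); rewrite ?mul1r ?mul0r ?conjC0.
Qed.

Lemma ampl_conj k p q (M : 'M[C]_(p, q)) (A : 'M[C]_(k * q)) :
  ampl (fun B => M *m B *m adjmx M) A
  = (1%:M *t M) *m A *m adjmx (1%:M *t M).
Proof.
apply/matrixP=> u w.
case: (mxtens_indexP u)=> a i; case: (mxtens_indexP w)=> b j.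
rewrite adjmx_tens1mx mul_mx_tens1E !mxE !mxtens_indexK /=.
apply: eq_bigr=> j' _; rewrite mul_tens1mxE mxE; congr (_ * _).
by apply: eq_bigr=> i' _; rewrite mxE.
Qed.

Lemma ampl_comp k n m p (f : 'M[C]_n -> 'M[C]_m) (g : 'M[C]_m -> 'M[C]_p)
    (A : 'M[C]_(k * n)) :
  ampl (fun B => g (f B)) A = ampl g (ampl f A).
Proof.
apply/matrixP=> u w; rewrite !mxE; congr (g _ _ _).
by apply/matrixP=> i j; rewrite !mxE !mxtens_indexK.
Qed.

Lemma ampl_sum k n m (I : finType) (f : I -> 'M[C]_n -> 'M[C]_m)
    (A : 'M[C]_(k * n)) :
  ampl (fun B => \sum_i f i B) A = \sum_i ampl (f i) A.
Proof.
apply/matrixP=> u w; rewrite !mxE !summxE.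
by apply: eq_bigr=> i _; rewrite mxE.
Qed.

Lemma cp_conj p q (M : 'M[C]_(p, q)) :
  completely_positive (fun A => M *m A *m adjmx M).
Proof.
split=> [a A B|k A A_pos]; last by rewrite ampl_conj; exact: posop_conj.
by rewrite mulmxDr mulmxDl -scalemxAr -scalemxAl.
Qed.

Lemma cp_comp n m p (f : 'M[C]_n -> 'M[C]_m) (g : 'M[C]_m -> 'M[C]_p) :
  completely_positive f -> completely_positive g ->
  completely_positive (fun A => g (f A)).
Proof.
case=> f_lin f_cp [g_lin g_cp]; split=> [a A B|k A A_pos].
  by rewrite f_lin g_lin.
by rewrite ampl_comp; apply/g_cp/f_cp.
Qed.

Lemma cp_sum n m (I : finType) (f : I -> 'M[C]_n -> 'M[C]_m) :
  (forall i, completely_positive (f i)) ->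
  completely_positive (fun A => \sum_i f i A).
Proof.
move=> f_cp; split=> [a A B|k A A_pos].
  rewrite scaler_sumr -big_split; apply: eq_bigr=> i _.
  by case: (f_cp i)=> f_lin _; rewrite f_lin.
rewrite ampl_sum; apply: posop_sum=> i.
by case: (f_cp i)=> _; apply.
Qed.

End Ampliation.

Section StatesSpan.
Variable C : numClosedFieldType.

Lemma polarization n (v w : 'cV[C]_n) :
  (2 : C) *: (v *m adjmx w) =
    (v + w) *m adjmx (v + w)
    + 'i *: ((v + 'i *: w) *m adjmx (v + 'i *: w))
    - (1 + 'i) *: (v *m adjmx v + w *m adjmx w).
Proof.
have polar (i xa xb ya yb : C) : i * i = -1 ->
    2 * (xa * yb) = (xa + ya) * (xb + yb) + i * ((xa + i * ya) * (xb + - i * yb))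
                    - (1 + i) * (xa * xb + ya * yb).
  move=> ii; apply/eqP; rewrite -subr_eq0; apply/eqP.
  transitivity ((i * i + 1) * (xa * yb - ya * xb + i * ya * yb)); first by ring.
  by rewrite ii addNr mul0r.
apply/matrixP=> a b; rewrite !(mxE, big_ord1, adjmxE) !rmorphD !rmorphM /= conjCi.
exact: polar (mulCii C).
Qed.

Lemma is_state_rank1 n (w : 'cV[C]_n) :
  w != 0 -> is_state (w *m ((adjmx w *m w) 0 0)^-1%:M *m adjmx w).
Proof.
move=> w_neq0; have norm_gt0 := adjmx_mul_self_gt0 w_neq0.
split; first by apply/posop_conj/posop_scalar; rewrite invr_ge0 ltW.
rewrite mxtrace_mulC mulmxA mul_mx_scalar /mxtrace big_ord1 mxE.
by rewrite mulVf // gt_eqF.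
Qed.

(* States span all operators: rank-one projections are multiples of states, the
   [v w^†] are combinations of those by polarization, and the matrix units
   [delta_mx i j] are of the form [v w^†]. *)
Lemma lfun_states_eq0 n (phi : 'M[C]_n -> C) :
  (forall a A B, phi (a *: A + B) = a * phi A + phi B) ->
  (forall rho, is_state rho -> phi rho = 0) -> forall A, phi A = 0.
Proof.
move=> phi_lin phi_states.
have phi0 : phi 0 = 0.
  by have := phi_lin (-1) 0 0; rewrite scaler0 addr0 mulN1r addNr.
have phiZ a A : phi (a *: A) = a * phi A.
  by have := phi_lin a A 0; rewrite addr0 phi0 addr0.
have phiD A B : phi (A + B) = phi A + phi B.
  by have := phi_lin 1 A B; rewrite scale1r mul1r.
have phiB A B : phi (A - B) = phi A - phi B.
  by rewrite phiD -scaleN1r phiZ mulN1r.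
have phi_rank1 (w : 'cV[C]_n) : phi (w *m adjmx w) = 0.
  have [->|w_neq0] := eqVneq w 0; first by rewrite mul0mx phi0.
  have norm_neq0 : (adjmx w *m w) 0 0 != 0 by rewrite gt_eqF ?adjmx_mul_self_gt0.
  have -> : w *m adjmx w
      = (adjmx w *m w) 0 0 *: (w *m ((adjmx w *m w) 0 0)^-1%:M *m adjmx w).
    by rewrite mul_mx_scalar -scalemxAl scalerA mulfV // scale1r.
  by rewrite phiZ phi_states ?mulr0 //; exact: is_state_rank1.
have phi_dyad (v w : 'cV[C]_n) : phi (v *m adjmx w) = 0.
  apply: (@mulfI _ 2); first by rewrite pnatr_eq0.
  rewrite -phiZ polarization phiB phiD !phiZ phiD !phi_rank1.
  by rewrite !(mulr0, addr0, subr0).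
have phi_sum (I : finType) (F : I -> 'M[C]_n) : phi (\sum_i F i) = \sum_i phi (F i).
  exact: (big_morph phi phiD phi0).
move=> A; rewrite (matrix_sum_delta A) phi_sum big1 // => i _.
by rewrite phi_sum big1 // => j _; rewrite phiZ delta_mx_cV phi_dyad mulr0.
Qed.

End StatesSpan.

Section Ancilla.
Variables (C : numClosedFieldType) (n m : nat).

Lemma sum_nat_eq_mull (T : finType) (a : T) (F : T -> C) :
  \sum_u (a == u)%:R * F u = F a.
Proof.
rewrite (bigD1 a) //= eqxx mul1r big1 ?addr0 // => u u_neq_a.
by rewrite eq_sym (negbTE u_neq_a) mul0r.
Qed.

(* [anc_proj c] is [1 ⊗ <c| : C^n ⊗ C^m -> C^n]. *)
Definition anc_proj (c : 'I_m) : 'M[C]_(n, n * m) :=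
  \matrix_(i, u) (mxtens_index (i, c) == u)%:R.

Lemma mul_anc_projE c p (Y : 'M[C]_(n * m, p)) i j :
  (anc_proj c *m Y) i j = Y (mxtens_index (i, c)) j.
Proof. by rewrite mxE; under eq_bigr do rewrite mxE; exact: sum_nat_eq_mull. Qed.

Lemma mul_mx_anc_projE c p (Y : 'M[C]_(p, n * m)) i j :
  (Y *m adjmx (anc_proj c)) i j = Y i (mxtens_index (j, c)).
Proof.
rewrite mxE -[RHS]sum_nat_eq_mull; apply: eq_bigr=> u _.
by rewrite adjmxE mxE conjC_nat mulrC.
Qed.

Lemma anc_proj_conjE c c' (Y : 'M[C]_(n * m)) i j :
  (anc_proj c *m Y *m adjmx (anc_proj c')) i j
  = Y (mxtens_index (i, c)) (mxtens_index (j, c')).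
Proof. by rewrite mul_mx_anc_projE mul_anc_projE. Qed.

Lemma anc_proj_mul_adj c c' :
  anc_proj c *m adjmx (anc_proj c') = (c == c')%:R%:M.
Proof.
apply/matrixP=> i j; rewrite -[anc_proj c]mulmx1 anc_proj_conjE !mxE.
rewrite (can_eq (@mxtens_indexK _ _)) xpair_eqE.
by case: (i == j); case: (c == c'); rewrite ?mulr1n ?mulr0n ?mulr1 ?mulr0.
Qed.

Lemma anc_proj_mul_adj_id c : anc_proj c *m adjmx (anc_proj c) = 1%:M.
Proof. by rewrite anc_proj_mul_adj eqxx. Qed.

Lemma ptrA_sum_conj (Y : 'M[C]_(n * m)) :
  ptrA Y = \sum_c anc_proj c *m Y *m adjmx (anc_proj c).
Proof.
apply/matrixP=> i j; rewrite summxE mxE.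
by apply: eq_bigr=> c _; rewrite anc_proj_conjE.
Qed.

Lemma mxtrace_ptrA (Y : 'M[C]_(n * m)) : \tr (ptrA Y) = \tr Y.
Proof. by rewrite /mxtrace big_mxtens_index; apply: eq_bigr=> i _; rewrite mxE. Qed.

Lemma ptrA_tensmx (A : 'M[C]_n) (xi : 'M[C]_m) : ptrA (A *t xi) = \tr xi *: A.
Proof.
apply/matrixP=> i j; rewrite !mxE /mxtrace mulr_suml.
by apply: eq_bigr=> c _; rewrite tensmxE mulrC.
Qed.

Lemma cp_ptrA : completely_positive (@ptrA C n m).
Proof.
have -> : @ptrA C n m = fun Y => \sum_c anc_proj c *m Y *m adjmx (anc_proj c).
  by apply: boolp.funext => Y; exact: ptrA_sum_conj.
by apply: cp_sum=> c; apply: cp_conj.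
Qed.

Lemma posdef_ptrA (c : 'I_m) (Y : 'M[C]_(n * m)) : posdef Y -> posdef (ptrA Y).
Proof.
move=> Y_pd; rewrite ptrA_sum_conj.
apply: (posdef_sum_conj (P := fun _ => Y)) => // v v_neq0.
exists c; apply: contra v_neq0 => /eqP v0.
by rewrite -(mul1mx v) -(anc_proj_mul_adj_id c) -mulmxA v0 mulmx0.
Qed.

End Ancilla.

Section Scheme.
Variables (C : numClosedFieldType) (n : nat) (X : finType).
Variable I : X -> 'M[C]_n -> 'M[C]_n.

Local Notation m := #|X|.

Hypothesis outcomes_gt0 : (0 < m)%N.

Definition outcome_embed (x : X) : 'M[C]_(n * m, n) :=
  adjmx (@anc_proj C n m (enum_rank x)).

Definition scheme_channel (Y : 'M[C]_(n * m)) : 'M[C]_(n * m) :=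
  \sum_x outcome_embed x *m I x (ptrA Y) *m adjmx (outcome_embed x).

Definition pointer (x : X) : 'M[C]_m := delta_mx (enum_rank x) (enum_rank x).

Definition maximally_mixed : 'M[C]_m := (m%:R^-1)%:M.

Lemma outcome_embedE x u j :
  outcome_embed x u j = (mxtens_index (j, enum_rank x) == u)%:R.
Proof. by rewrite adjmxE mxE conjC_nat. Qed.

Lemma outcome_embed_isometry x y :
  adjmx (outcome_embed x) *m outcome_embed y = (x == y)%:R%:M.
Proof. by rewrite /outcome_embed adjmxK anc_proj_mul_adj (can_eq enum_rankK). Qed.

Lemma ptrA_outcome_embed_conj x (B : 'M[C]_n) :
  ptrA (outcome_embed x *m B *m adjmx (outcome_embed x)) = B.
Proof.
rewrite ptrA_sum_conj (bigD1 (enum_rank x)) //= big1 ?addr0.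
  by rewrite /outcome_embed adjmxK !mulmxA anc_proj_mul_adj_id mul1mx
    -mulmxA anc_proj_mul_adj_id mulmx1.
move=> c c_neq; rewrite /outcome_embed adjmxK !mulmxA anc_proj_mul_adj.
by rewrite (negbTE c_neq) mul_scalar_mx scale0r !mul0mx.
Qed.

Lemma tens_pointer_outcome_embed x y :
  (1%:M *t pointer x) *m outcome_embed y = (x == y)%:R *: outcome_embed y.
Proof.
apply/matrixP=> u j; case: (mxtens_indexP u)=> a e.
rewrite mul_tens1mxE mxE outcome_embedE.
under eq_bigr do rewrite outcome_embedE mxE.
rewrite (can_eq (@mxtens_indexK _ _)) xpair_eqE.
have [-> | e_neq] := eqVneq e (enum_rank x).
  rewrite (bigD1 (enum_rank x)) //= big1 ?addr0; last first.
    by move=> e' /negbTE ->; rewrite mul0r.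
  rewrite eqxx mul1r (can_eq (@mxtens_indexK _ _)) xpair_eqE (can_eq enum_rankK).
  by rewrite [y == x]eq_sym; case: (j == a); case: (x == y);
    rewrite /= ?mulr1 ?mulr0 ?mul1r ?mul0r.
rewrite big1; last by move=> e' _; rewrite /= mul0r.
have [x_eq_y|] := eqVneq x y; last by rewrite mul0r.
by rewrite -x_eq_y [enum_rank x == e]eq_sym (negbTE e_neq) andbF mulr0.
Qed.

Lemma sum_pointer : \sum_x pointer x = 1%:M.
Proof.
apply/matrixP=> a b; rewrite summxE mxE -[a]enum_valK -[b]enum_valK.
under eq_bigr do rewrite /pointer mxE !(can_eq enum_rankK).
rewrite (can_eq enum_rankK) (bigD1 (enum_val a)) //= eqxx big1 ?addr0.
  by rewrite [enum_val b == _]eq_sym.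
by move=> y /negbTE; rewrite eq_sym => ->.
Qed.

Lemma mxtrace_maximally_mixed : \tr maximally_mixed = 1.
Proof.
rewrite mxtrace_scalar -[_ *+ m]mulr_natr mulVf //.
by rewrite pnatr_eq0 -lt0n outcomes_gt0.
Qed.

Lemma posdef_maximally_mixed : posdef maximally_mixed.
Proof. by apply: posdef_scalar; rewrite invr_gt0 ltr0n outcomes_gt0. Qed.

Lemma is_state_maximally_mixed : is_state maximally_mixed.
Proof.
by split; [exact: posdef_posop posdef_maximally_mixed | exact: mxtrace_maximally_mixed].
Qed.

Lemma scheme_implements : implements maximally_mixed scheme_channel pointer I.
Proof.
move=> x A; rewrite /scheme_channel ptrA_tensmx mxtrace_maximally_mixed scale1r.
rewrite mulmx_sumr (bigD1 x) //= big1 ?addr0.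
  by rewrite !mulmxA tens_pointer_outcome_embed eqxx scale1r ptrA_outcome_embed_conj.
move=> y y_neq_x; rewrite !mulmxA tens_pointer_outcome_embed eq_sym.
by rewrite (negbTE y_neq_x) scale0r !mul0mx.
Qed.

Hypothesis I_cp : forall x, completely_positive (I x).
Hypothesis I_tr_sum : forall A, \sum_x \tr (I x A) = \tr A.

Lemma cp_scheme_channel : completely_positive scheme_channel.
Proof.
apply: (cp_sum (f := fun x Y => outcome_embed x *m I x (ptrA Y) *m adjmx (outcome_embed x))) => x.
apply: (cp_comp (f := fun Y => I x (ptrA Y))
                (g := fun B => outcome_embed x *m B *m adjmx (outcome_embed x))).
  exact: (cp_comp (@cp_ptrA C n m) (I_cp x)).
exact: cp_conj.
Qed.

Lemma trace_preserving_scheme_channel : trace_preserving scheme_channel.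
Proof.
move=> Y; rewrite raddf_sum /= -[RHS]mxtrace_ptrA -I_tr_sum.
apply: eq_bigr=> x _; rewrite mxtrace_mulC mulmxA outcome_embed_isometry eqxx.
by rewrite mul1mx.
Qed.

Lemma channel_scheme_channel : channel scheme_channel.
Proof. by split; [exact: cp_scheme_channel | exact: trace_preserving_scheme_channel]. Qed.

Lemma third_law_scheme_channel :
  (forall rho x, fullrank_state rho -> posdef (I x rho)) ->
  third_law_channel scheme_channel.
Proof.
move=> I_pd Y [[Y_pos Y_tr] Y_pd].
have ptrY_full : fullrank_state (ptrA Y).
  have ptrY_pd := posdef_ptrA (Ordinal outcomes_gt0) Y_pd.
  by split=> //; split; [exact: posdef_posop | rewrite mxtrace_ptrA].
have chY_pd : posdef (scheme_channel Y).
  apply: posdef_sum_conj => [x|v /cV_neq0_entry[u v_u]]; first exact: I_pd.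
  case: (mxtens_indexP u) v_u => a c v_ac.
  exists (enum_val c); apply/eqP => /matrixP /(_ a 0).
  by rewrite /outcome_embed adjmxK mul_anc_projE enum_valK mxE; apply/eqP.
split=> //; split; first exact: posdef_posop.
by rewrite trace_preserving_scheme_channel.
Qed.

End Scheme.

Section Instrument.
Variables (C : numClosedFieldType) (n : nat) (X : finType).
Variables (E : X -> 'M[C]_n) (I : X -> 'M[C]_n -> 'M[C]_n).

Lemma observable_card_gt0 : (0 < n)%N -> observable E -> (0 < #|X|)%N.
Proof.
move=> n_gt0 [_ _ _ E_sum]; rewrite lt0n; apply/eqP=> /card0_eq X_empty.
pose i0 : 'I_n := Ordinal n_gt0.
move: E_sum; rewrite big_pred0 // => /matrixP /(_ i0 i0).
by rewrite !mxE eqxx /= => /eqP; rewrite eq_sym oner_eq0.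
Qed.

Lemma instrument_mxtrace x A :
  instrument E I -> \tr (I x A) = \tr (E x *m A).
Proof.
move=> [I_cp I_tr]; apply/eqP; rewrite -subr_eq0; apply/eqP; move: A.
apply: (lfun_states_eq0 (phi := fun A => \tr (I x A) - \tr (E x *m A))).
  move=> a A B /=; case: (I_cp x) => I_lin _.
  rewrite I_lin mulmxDr -scalemxAr !mxtraceD !mxtraceZ; ring.
by move=> rho rho_state /=; rewrite I_tr // subrr.
Qed.

Lemma instrument_mxtrace_sum A :
  observable E -> instrument E I -> \sum_x \tr (I x A) = \tr A.
Proof.
move=> [_ _ _ E_sum] I_instr.
under eq_bigr do rewrite instrument_mxtrace //.
by rewrite -raddf_sum /= -mulmx_suml E_sum mul1mx.
Qed.

End Instrument.

Theorem mainTheorem13 (R : realType) (n : nat) (hn : (2 <= n)%N)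
  (X : finType) (E : X -> 'M[R[i]]_n) (I : X -> 'M[R[i]]_n -> 'M[R[i]]_n) :
  observable E -> completely_unsharp E -> instrument E I ->
  (forall (rho : 'M[R[i]]_n) (x : X), fullrank_state rho -> posdef (I x rho)) ->
  exists (m : nat) (xi : 'M[R[i]]_m) (Ech : 'M[R[i]]_(n * m) -> 'M[R[i]]_(n * m))
         (Z : X -> 'M[R[i]]_m),
    [/\ meas_scheme xi Ech Z, third_law_scheme xi Ech & implements xi Ech Z I].
Proof.
move=> E_obs _ I_instr I_pd.
have X_gt0 := observable_card_gt0 (ltnW hn) E_obs.
have I_cp : forall x, completely_positive (I x) by case: I_instr.
have I_tr_sum A := instrument_mxtrace_sum A E_obs I_instr.
exists #|X|, (maximally_mixed _ X), (scheme_channel I), (@pointer _ X); split.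
- split; [exact: is_state_maximally_mixed X_gt0 | exact: channel_scheme_channel |
          move=> x; exact: posop_delta_mx | exact: sum_pointer].
- split; [exact: posdef_maximally_mixed X_gt0 |].
  exact: third_law_scheme_channel X_gt0 I_tr_sum I_pd.
- exact: scheme_implements X_gt0.
Qed.
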